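(* Let $n\ge p\ge1$, $\lambda>0$, $0<\varepsilon<\frac34$, and let $f:\mathbb{R}^{n\times p}\to\mathbb{R}$ be twice continuously differentiable. Let $\mathrm{St}(p,n)^\varepsilon=\{X:\|X^\top X-I_p\|\le\varepsilon\}$, let $L>0$ be such that $\nabla f$ is $L$-Lipschitz on $\mathrm{St}(p,n)^\varepsilon$, $L'=\max_{X\in\mathrm{St}(p,n)^\varepsilon}\|\nabla f(X)\|$, $\hat L=\max(L,L')$, $s=\sup_{X\in\mathrm{St}(p,n)^\varepsilon}\|\mathrm{sym}(X^\top\nabla f(X))\|$, let $\mu\ge\frac{2}{3-4\varepsilon}\left(L(1-\varepsilon)+3s+\hat L^2\frac{(1+\varepsilon)^2}{\lambda(1-\varepsilon)}\right)$, $\nu=\lambda\mu$, and $\mathcal{L}(X)=f(X)-\frac12\langle\mathrm{sym}(X^\top\nabla f(X)),X^\top X-I_p\rangle+\mu\mathcal{N}(X)$. Let $\rho=\min\left(\frac12,\frac{\nu}{4\lambda^2(1+\varepsilon)}\right)$. Then for all $X\in\mathrm{St}(p,n)^\varepsilon$, $$\langle\Lambda(X),\nabla\mathcal{L}(X)\rangle\ge\rho\|\Lambda(X)\|^2.$$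
   Context: $\|\cdot\|$ and $\langle\cdot,\cdot\rangle$ are the Frobenius norm and inner product. $\mathrm{sym}(M)=\frac12(M+M^\top)$, $\mathrm{skew}(M)=\frac12(M-M^\top)$. $\mathcal{N}(X)=\frac14\|X^\top X-I_p\|^2$. $\mathrm{grad}f(X)=\mathrm{skew}(\nabla f(X)X^\top)X$ for all $X$, and $\Lambda(X)=\mathrm{grad}f(X)+\lambda X(X^\top X-I_p)$. *)

From HB Require Import structures.
From mathcomp Require Import all_boot all_order all_algebra.
From mathcomp Require Import all_classical all_reals all_analysis.
Set Implicit Arguments. Unset Strict Implicit. Unset Printing Implicit Defensive.
Import Order.TTheory GRing.Theory Num.Theory.
Import numFieldNormedType.Exports.
Local Open Scope ring_scope.

Section Defs.
Variable R : realType.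

Definition frob {m k : nat} (A B : 'M[R]_(m, k)) : R :=
  \sum_(i < m) \sum_(j < k) A i j * B i j.
Definition fnorm {m k : nat} (A : 'M[R]_(m, k)) : R := Num.sqrt (frob A A).

Definition msym {m : nat} (M : 'M[R]_m) : 'M[R]_m := 2^-1 *: (M + M^T).
Definition mskew {m : nat} (M : 'M[R]_m) : 'M[R]_m := 2^-1 *: (M - M^T).

Definition Npen {n p : nat} (X : 'M[R]_(n, p)) : R :=
  4^-1 * fnorm (X^T *m X - 1%:M) ^+ 2.

Definition StEps {n p : nat} (eps : R) (X : 'M[R]_(n, p)) : Prop :=
  fnorm (X^T *m X - 1%:M) <= eps.

Definition is_grad {n p : nat} (F : 'M[R]_(n, p) -> R)
  (G : 'M[R]_(n, p) -> 'M[R]_(n, p)) : Prop :=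
  forall X, differentiable F X /\ forall H, 'D_H F X = frob (G X) H.

Definition rgrad {n p : nat} (G : 'M[R]_(n, p) -> 'M[R]_(n, p))
  (X : 'M[R]_(n, p)) : 'M[R]_(n, p) :=
  mskew (G X *m X^T) *m X.

Definition LambdaF {n p : nat} (G : 'M[R]_(n, p) -> 'M[R]_(n, p)) (lam : R)
  (X : 'M[R]_(n, p)) : 'M[R]_(n, p) :=
  rgrad G X + lam *: (X *m (X^T *m X - 1%:M)).

Definition calL {n p : nat} (f : 'M[R]_(n, p) -> R)
  (G : 'M[R]_(n, p) -> 'M[R]_(n, p)) (mu : R) (X : 'M[R]_(n, p)) : R :=
  f X - 2^-1 * frob (msym (X^T *m G X)) (X^T *m X - 1%:M) + mu * Npen X.

End Defs.

(* Write Lambda(X) = Omega X + lam N with Omega = skew(nabla f(X) X^T),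
   Delta = X^T X - I and N = X Delta.  As Omega is skew while Delta and
   sym(X^T nabla f(X)) are symmetric, <nabla f(X), Omega X> = ||Omega||^2 and
   Omega X is orthogonal to N and to X sym(X^T nabla f(X)); hence the derivative
   of the merit function along Lambda is ||Omega||^2 + lam mu ||N||^2 up to
   error terms of sizes ||Omega X|| ||nabla f|| ||Delta||, lam s ||Delta||^2 and
   <D nabla f(X)[Lambda], N>.  The last one is at most L ||Lambda|| ||N||:
   since <N, Lambda> = lam ||N||^2 > 0, the defect of X + h Lambda shrinks for
   small h < 0, so the Lipschitz bound on St(p,n)^eps controls the left
   difference quotients.  With ||Omega X||^2 <= (1 + ||Delta||) ||Omega||^2,
   (1 -+ ||Delta||) ||Delta||^2 bounds on ||N||^2 and Young's inequality for the
   cross terms, the claim reduces to the choice of mu. *)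

From HB Require Import structures.
From mathcomp Require Import all_boot all_order all_algebra.
From mathcomp Require Import all_classical all_reals all_analysis.
From mathcomp Require Import ring lra.
Import Order.TTheory GRing.Theory Num.Theory.
Import numFieldNormedType.Exports.
Set Implicit Arguments. Unset Strict Implicit. Unset Printing Implicit Defensive.
Local Open Scope classical_set_scope.
Local Open Scope ring_scope.

Local Notation defect X := (X^T *m X - 1%:M).
Local Notation skew_gx G0 X := (mskew (G0 *m X^T)).
Local Notation sym_xg X G0 := (msym (X^T *m G0)).

Section Frobenius.
Variable R : realType.
Implicit Types (m k l : nat).

Lemma frob_trace m k (A B : 'M[R]_(m, k)) : frob A B = \tr (A^T *m B).
Proof.
rewrite /frob /mxtrace exchange_big /=; apply: eq_bigr => j _.
by rewrite !mxE; apply: eq_bigr => i _; rewrite !mxE.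
Qed.

Lemma frobC m k (A B : 'M[R]_(m, k)) : frob A B = frob B A.
Proof. by apply: eq_bigr => i _; apply: eq_bigr => j _; rewrite mulrC. Qed.

Lemma frobDl m k (A B C : 'M[R]_(m, k)) : frob (A + B) C = frob A C + frob B C.
Proof.
rewrite /frob -big_split /=; apply: eq_bigr => i _.
by rewrite -big_split /=; apply: eq_bigr => j _; rewrite mxE mulrDl.
Qed.

Lemma frobZl m k a (A C : 'M[R]_(m, k)) : frob (a *: A) C = a * frob A C.
Proof.
rewrite /frob mulr_sumr; apply: eq_bigr => i _.
by rewrite mulr_sumr; apply: eq_bigr => j _; rewrite mxE mulrA.
Qed.

Lemma frobNl m k (A C : 'M[R]_(m, k)) : frob (- A) C = - frob A C.
Proof. by rewrite -scaleN1r frobZl mulN1r. Qed.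

Lemma frobBl m k (A B C : 'M[R]_(m, k)) : frob (A - B) C = frob A C - frob B C.
Proof. by rewrite frobDl frobNl. Qed.

Lemma frobDr m k (A B C : 'M[R]_(m, k)) : frob C (A + B) = frob C A + frob C B.
Proof. by rewrite frobC frobDl !(frobC C). Qed.

Lemma frobZr m k a (A C : 'M[R]_(m, k)) : frob C (a *: A) = a * frob C A.
Proof. by rewrite frobC frobZl frobC. Qed.

Lemma frobBr m k (A B C : 'M[R]_(m, k)) : frob C (A - B) = frob C A - frob C B.
Proof. by rewrite !(frobC C) frobBl. Qed.

Lemma frob0r m k (C : 'M[R]_(m, k)) : frob C 0 = 0.
Proof. by rewrite -(scale0r (0 : 'M[R]_(m, k))) frobZr mul0r. Qed.

Lemma frob_trmx m k (A B : 'M[R]_(m, k)) : frob A^T B^T = frob A B.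
Proof. by rewrite !frob_trace trmxK -mxtrace_tr trmx_mul trmxK mxtrace_mulC. Qed.

Lemma frob_mulmxl m k l (A : 'M[R]_(m, k)) (B : 'M[R]_(k, l)) C :
  frob (A *m B) C = frob B (A^T *m C).
Proof. by rewrite !frob_trace trmx_mul mulmxA. Qed.

Lemma frob_mulmxr m k l (A : 'M[R]_(m, k)) (B : 'M[R]_(k, l)) C :
  frob (A *m B) C = frob A (C *m B^T).
Proof. by rewrite !frob_trace trmx_mul -mulmxA mxtrace_mulC mulmxA mxtrace_mulC. Qed.

Lemma frob_ge0 m k (A : 'M[R]_(m, k)) : 0 <= frob A A.
Proof. by do 2![apply: sumr_ge0 => ? _]; rewrite -expr2 sqr_ge0. Qed.

Lemma frob_eq0 m k (A : 'M[R]_(m, k)) : (frob A A == 0) = (A == 0).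
Proof.
apply/idP/eqP => [|->]; last by rewrite frob0r.
have sq_ge0 (x : R) : 0 <= x * x by rewrite -expr2 sqr_ge0.
rewrite psumr_eq0 => [/allP A0|i _]; last by apply: sumr_ge0.
apply/matrixP => i j; move/implyP: (A0 i (mem_index_enum _)) => /(_ isT).
rewrite psumr_eq0 // => /allP/(_ j (mem_index_enum _))/implyP/(_ isT).
by rewrite mulf_eq0 orbb mxE => /eqP.
Qed.

Lemma frob_gt0 m k (A : 'M[R]_(m, k)) : (0 < frob A A) = (A != 0).
Proof. by rewrite lt_def frob_eq0 frob_ge0 andbT. Qed.

Lemma sqr_frob_le m k (A B : 'M[R]_(m, k)) : frob A B ^+ 2 <= frob A A * frob B B.
Proof.
have [->|B0] := eqVneq B 0; first by rewrite !frob0r mulr0 expr0n.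
have BB_gt0 : 0 < frob B B by rewrite frob_gt0.
have := frob_ge0 (frob B B *: A - frob A B *: B).
rewrite !(frobBl, frobBr, frobZl, frobZr) (frobC B A) => H.
have : 0 <= frob B B * (frob A A * frob B B - frob A B ^+ 2) by nra.
by rewrite pmulr_rge0 // subr_ge0.
Qed.

Lemma fnorm_ge0 m k (A : 'M[R]_(m, k)) : 0 <= fnorm A.
Proof. exact: sqrtr_ge0. Qed.

Lemma fnorm_sqr m k (A : 'M[R]_(m, k)) : fnorm A ^+ 2 = frob A A.
Proof. by rewrite sqr_sqrtr // frob_ge0. Qed.

Lemma fnorm0 m k : fnorm (0 : 'M[R]_(m, k)) = 0.
Proof. by rewrite /fnorm frob0r sqrtr0. Qed.

Lemma normr_frob_le m k (A B : 'M[R]_(m, k)) : `|frob A B| <= fnorm A * fnorm B.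
Proof.
rewrite -ler_sqr ?nnegrE ?mulr_ge0 ?fnorm_ge0 //.
by rewrite real_normK ?num_real // exprMn !fnorm_sqr sqr_frob_le.
Qed.

Lemma frob_le m k (A B : 'M[R]_(m, k)) : frob A B <= fnorm A * fnorm B.
Proof. exact: le_trans (ler_norm _) (normr_frob_le A B). Qed.

Lemma fnormZ m k a (A : 'M[R]_(m, k)) : fnorm (a *: A) = `|a| * fnorm A.
Proof. by rewrite /fnorm frobZl frobZr mulrA -expr2 sqrtrM ?sqr_ge0 // sqrtr_sqr. Qed.

Lemma fnorm_mulmx_le m k l (A : 'M[R]_(m, k)) (B : 'M[R]_(k, l)) :
  fnorm (A *m B) <= fnorm A * fnorm B.
Proof.
rewrite -sqrtrM ?frob_ge0 // ler_sqrt ?mulr_ge0 ?frob_ge0 //.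
pose rA i := \sum_k0 A i k0 * A i k0; pose cB j := \sum_k0 B k0 j * B k0 j.
have -> : frob A A * frob B B = \sum_i \sum_j rA i * cB j.
  by rewrite /frob mulr_suml; apply: eq_bigr => i _; rewrite -mulr_sumr exchange_big.
apply: ler_sum => i _; apply: ler_sum => j _.
have := sqr_frob_le (row i A) (col j B)^T.
have -> : frob (row i A) (col j B)^T = (A *m B) i j.
  by rewrite /frob big_ord1 mxE; apply: eq_bigr => k0 _; rewrite !mxE.
have -> : frob (row i A) (row i A) = rA i.
  by rewrite /frob big_ord1; apply: eq_bigr => k0 _; rewrite !mxE.
have -> : frob (col j B)^T (col j B)^T = cB j.
  by rewrite /frob big_ord1; apply: eq_bigr => k0 _; rewrite !mxE.
by rewrite expr2.
Qed.

Lemma frob_mulmxl_le m k l (A : 'M[R]_(m, k)) (B : 'M[R]_(k, l)) C :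
  frob (A *m B) C <= fnorm A * fnorm B * fnorm C.
Proof. exact: le_trans (frob_le _ _) (ler_wpM2r (fnorm_ge0 _) (fnorm_mulmx_le _ _)). Qed.

Lemma trmx_msym m (M : 'M[R]_m) : (msym M)^T = msym M.
Proof. by rewrite linearZ linearD /= trmxK addrC. Qed.

Lemma trmx_mskew m (M : 'M[R]_m) : (mskew M)^T = - mskew M.
Proof. by rewrite linearZ linearB /= trmxK -scalerN opprB. Qed.

Lemma msym_add_mskew m (M : 'M[R]_m) : msym M + mskew M = M.
Proof. by apply/matrixP => i j; rewrite !mxE; field. Qed.

Lemma frob_sym_skew m (A B : 'M[R]_m) : A^T = A -> B^T = - B -> frob A B = 0.
Proof.
move=> symA skewB; have := frob_trmx A B; rewrite symA skewB -scaleN1r frobZr.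
by rewrite mulN1r; lra.
Qed.

Lemma frob_msyml m (M K : 'M[R]_m) : K^T = K -> frob (msym M) K = frob M K.
Proof.
by move=> symK; rewrite frobZl frobDl -{2}symK frob_trmx; field.
Qed.

Lemma frob_mulmx_sym_skew m k (X : 'M[R]_(m, k)) (K : 'M[R]_k) (W : 'M[R]_m) :
  K^T = K -> W^T = - W -> frob (X *m K) (W *m X) = 0.
Proof.
move=> symK skewW; rewrite frobC frob_mulmxr frobC frob_sym_skew //.
by rewrite !trmx_mul trmxK symK mulmxA.
Qed.

Lemma normr_frob_cube_le m (D : 'M[R]_m) :
  `|frob D (D *m D)| <= fnorm D ^+ 3.
Proof.
apply: le_trans (normr_frob_le _ _) _.
by rewrite exprSr expr2 -mulrA ler_wpM2l ?fnorm_ge0 // fnorm_mulmx_le.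
Qed.

End Frobenius.

Section StiefelPoint.
Variable R : realType.
Variables (n p : nat) (X : 'M[R]_(n, p)).

Lemma trmx_defect : (defect X)^T = defect X.
Proof. by rewrite linearB /= trmx_mul trmxK tr_scalar_mx. Qed.

Lemma mulmx_gram_defect : X^T *m X *m defect X = defect X *m defect X + defect X.
Proof. by rewrite mulmxBl mul1mx subrK. Qed.

Lemma sqr_fnorm_mulmx_gram_le m (W : 'M[R]_(m, n)) :
  fnorm (W *m X) ^+ 2 <= (1 + fnorm (defect X)) * frob W W.
Proof.
set a := fnorm (W *m X); set T := W *m X *m X^T.
have a_ge0 : 0 <= a := fnorm_ge0 _.
have d_ge0 : 0 <= fnorm (defect X) := fnorm_ge0 _.
have aE : a ^+ 2 = frob W T by rewrite fnorm_sqr frob_mulmxr.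
have TT_le : frob T T <= (1 + fnorm (defect X)) * a ^+ 2.
  rewrite {1}/T frob_mulmxr trmxK.
  have -> : T *m X = W *m X *m defect X + W *m X by rewrite mulmxBr mulmx1 subrK !mulmxA.
  rewrite frobDr addrC -fnorm_sqr -/a mulrDl mul1r lerD2l.
  apply: le_trans (frob_le _ _) _; rewrite expr2 mulrCA ler_wpM2l //.
  by rewrite mulrC fnorm_mulmx_le.
have := sqr_frob_le W T; rewrite -aE => a4_le.
have [a0|a_neq0] := eqVneq a 0; first by rewrite a0 expr0n mulr_ge0 ?addr_ge0 ?frob_ge0.
have a2_gt0 : 0 < a ^+ 2 by rewrite exprn_gt0 // lt_def a_neq0.
rewrite -(ler_pM2l a2_gt0) -expr2 mulrCA; apply: le_trans a4_le _.
by rewrite mulrA [_ * frob W W]mulrC ler_wpM2l ?frob_ge0.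
Qed.

Lemma sqr_fnorm_normal : fnorm (X *m defect X) ^+ 2
  = fnorm (defect X) ^+ 2 + frob (defect X) (defect X *m defect X).
Proof. by rewrite !fnorm_sqr frob_mulmxl mulmxA mulmx_gram_defect frobDr addrC. Qed.

Lemma sqr_fnorm_normal_ge :
  (1 - fnorm (defect X)) * fnorm (defect X) ^+ 2 <= fnorm (X *m defect X) ^+ 2.
Proof.
have := normr_frob_cube_le (defect X); rewrite ler_norml => /andP[cube_ge _].
by rewrite sqr_fnorm_normal mulrBl mul1r -exprS; lra.
Qed.

Lemma sqr_fnorm_normal_le :
  fnorm (X *m defect X) ^+ 2 <= (1 + fnorm (defect X)) * fnorm (defect X) ^+ 2.
Proof.
have := normr_frob_cube_le (defect X); rewrite ler_norml => /andP[_ cube_le].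
by rewrite sqr_fnorm_normal mulrDl mul1r -exprS; lra.
Qed.

Variable G0 : 'M[R]_(n, p).

Lemma frob_rgrad :
  frob G0 (skew_gx G0 X *m X) = frob (skew_gx G0 X) (skew_gx G0 X).
Proof.
rewrite frobC frob_mulmxr; set M := G0 *m X^T.
rewrite -{2}(msym_add_mskew M) frobDr [frob _ (msym M)]frobC frob_sym_skew ?add0r //.
  exact: trmx_msym.
exact: trmx_mskew.
Qed.

Lemma frob_normal_terms :
  frob G0 (X *m defect X) - 2^-1 * frob (G0 *m defect X) (X *m defect X)
    - frob (X *m sym_xg X G0) (X *m defect X)
  = - (3 / 2) * frob (sym_xg X G0) (defect X *m defect X).
Proof.
set S := sym_xg X G0; set D := defect X.
have symDD : (D *m D)^T = D *m D by rewrite trmx_mul trmx_defect.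
have -> : frob G0 (X *m D) = frob S D.
  by rewrite frobC frob_mulmxl frobC frob_msyml // trmx_defect.
have -> : frob (G0 *m D) (X *m D) = frob S (D *m D).
  by rewrite frobC frob_mulmxl mulmxA frobC frob_mulmxr trmx_defect frob_msyml.
have -> : frob (X *m S) (X *m D) = frob S (D *m D) + frob S D.
  by rewrite frob_mulmxl mulmxA mulmx_gram_defect frobDr.
by field.
Qed.

End StiefelPoint.

Section MatrixDerivative.
Variables (R : realType) (V : normedModType R).

Definition is_mxderive a b (F : V -> 'M[R]_(a, b)) (x v : V) (D : 'M[R]_(a, b)) :=
  forall i j, is_derive x v (fun y => F y i j) (D i j).

Lemma derivable_mxderive a b (F : V -> 'M[R]_(a, b)) x v :
  derivable F x v -> is_mxderive F x v ('D_v F x).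
Proof.
move=> dF i j.
set q := fun h : R => h^-1 *: ((F \o shift x) (h *: v) - F x).
have coordE : (fun h : R => h^-1 *: (((fun y => F y i j) \o shift x) (h *: v) - F x i j))
    = (fun M : 'M[R]_(a, b) => M i j) \o q.
  by apply/funext => h /=; rewrite !mxE.
have q_ij : (fun M : 'M[R]_(a, b) => M i j) \o q @ 0^' --> 'D_v F x i j.
  have q_cvg : q @ 0^' --> 'D_v F x by exact: dF.
  by apply: cvg_comp q_cvg _; exact: coord_continuous.
split; first by rewrite /derivable coordE; apply/cvg_ex; exists ('D_v F x i j).
by rewrite /derive coordE; exact: cvg_lim.
Qed.

Lemma is_mxderive_cst a b (C : 'M[R]_(a, b)) x v : is_mxderive (fun=> C) x v 0.
Proof. by move=> i j; rewrite mxE; exact: is_derive_cst. Qed.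

Lemma is_mxderiveB a b (F H : V -> 'M[R]_(a, b)) x v DF DH :
  is_mxderive F x v DF -> is_mxderive H x v DH ->
  is_mxderive (fun y => F y - H y) x v (DF - DH).
Proof.
move=> dF dH i j; rewrite !mxE.
have -> : (fun y => (F y - H y) i j) = (fun y => F y i j) - (fun y => H y i j).
  by apply/funext => y; rewrite !mxE.
by apply: is_deriveB; [exact: dF | exact: dH].
Qed.

Lemma is_mxderiveD a b (F H : V -> 'M[R]_(a, b)) x v DF DH :
  is_mxderive F x v DF -> is_mxderive H x v DH ->
  is_mxderive (fun y => F y + H y) x v (DF + DH).
Proof.
move=> dF dH i j; rewrite !mxE.
have -> : (fun y => (F y + H y) i j) = (fun y => F y i j) + (fun y => H y i j).
  by apply/funext => y; rewrite !mxE.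
by apply: is_deriveD; [exact: dF | exact: dH].
Qed.

Lemma is_mxderiveZ a b (c : R) (F : V -> 'M[R]_(a, b)) x v DF :
  is_mxderive F x v DF -> is_mxderive (fun y => c *: F y) x v (c *: DF).
Proof.
move=> dF i j; rewrite !mxE.
have -> : (fun y => (c *: F y) i j) = c \*: (fun y => F y i j).
  by apply/funext => y; rewrite !mxE.
by apply: is_deriveZ; exact: dF.
Qed.

Lemma is_mxderive_tr a b (F : V -> 'M[R]_(a, b)) x v DF :
  is_mxderive F x v DF -> is_mxderive (fun y => (F y)^T) x v DF^T.
Proof.
move=> dF i j; rewrite !mxE.
have -> : (fun y => (F y)^T i j) = (fun y => F y j i).
  by apply/funext => y; rewrite mxE.
exact: dF.
Qed.

Lemma is_mxderive_mul a b c (F : V -> 'M[R]_(a, b)) (H : V -> 'M[R]_(b, c)) x v DF DH :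
  is_mxderive F x v DF -> is_mxderive H x v DH ->
  is_mxderive (fun y => F y *m H y) x v (DF *m H x + F x *m DH).
Proof.
move=> dF dH i j.
have -> : (fun y => (F y *m H y) i j)
    = \sum_(k < b) ((fun y => F y i k) * (fun y => H y k j)).
  by apply/funext => y; rewrite mxE fct_sumE.
apply: is_derive_eq (is_derive_sum (fun k => is_deriveM (dF i k) (dH k j))) _.
rewrite !mxE -big_split; apply: eq_bigr => k _ /=.
by rewrite /GRing.scale /= addrC mulrC [H x k j * _]mulrC.
Qed.

Lemma is_derive_frob a b (F H : V -> 'M[R]_(a, b)) x v DF DH :
  is_mxderive F x v DF -> is_mxderive H x v DH ->
  is_derive x v (fun y => frob (F y) (H y)) (frob DF (H x) + frob (F x) DH).
Proof.
move=> dF dH.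
have -> : (fun y => frob (F y) (H y))
    = \sum_(i < a) \sum_(j < b) ((fun y => F y i j) * (fun y => H y i j)).
  by apply/funext => y; rewrite /frob fct_sumE; apply: eq_bigr => i _; rewrite fct_sumE.
apply: is_derive_eq (is_derive_sum (fun i => is_derive_sum (fun j =>
  is_deriveM (dF i j) (dH i j)))) _.
rewrite /frob -big_split; apply: eq_bigr => i _ /=.
rewrite -big_split; apply: eq_bigr => j _ /=.
by rewrite /GRing.scale /= addrC mulrC [H x i j * _]mulrC.
Qed.

End MatrixDerivative.

Lemma is_mxderive_id (R : realType) a b (x v : 'M[R]_(a, b)) :
  is_mxderive (fun y => y) x v v.
Proof. by have := derivable_mxderive (@derivable_id _ _ x v); rewrite derive_id. Qed.

Section MeritDerivative.
Variables (R : realType) (n p : nat).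
Local Notation V := ('M[R]_(n, p)).
Implicit Types (X v : V).

Lemma is_mxderive_defect X v :
  is_mxderive (fun Y : V => defect Y) X v (v^T *m X + X^T *m v).
Proof.
have := is_mxderiveB (is_mxderive_mul (is_mxderive_tr (is_mxderive_id X v))
  (is_mxderive_id X v)) (is_mxderive_cst 1%:M X v).
by rewrite subr0.
Qed.

Lemma frob_sym_gramD (K : 'M[R]_p) X v :
  K^T = K -> frob K (v^T *m X + X^T *m v) = 2 * frob (X *m K) v.
Proof.
move=> symK; rewrite frobDr -[frob K (v^T *m X)]frob_trmx trmx_mul trmxK symK.
by rewrite -frob_mulmxl mulr2n mulrDl mul1r.
Qed.

Lemma is_derive_Npen X v : is_derive X v (@Npen R n p) (frob (X *m defect X) v).
Proof.
have -> : @Npen R n p = 4^-1 \*: (fun Y : V => frob (defect Y) (defect Y)).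
  by apply/funext => Y; rewrite /Npen fnorm_sqr.
apply: is_derive_eq (is_deriveZ _ (is_derive_frob (is_mxderive_defect X v)
  (is_mxderive_defect X v))) _.
rewrite frobC -mulr2n frob_sym_gramD ?trmx_defect //.
by rewrite /GRing.scale /=; field.
Qed.

Lemma is_derive_frob_msym_defect (G : V -> V) X v DG : is_mxderive G X v DG ->
  is_derive X v (fun Y => frob (sym_xg Y (G Y)) (defect Y))
    (frob (G X *m defect X) v + frob DG (X *m defect X)
     + 2 * frob (X *m sym_xg X (G X)) v).
Proof.
move=> dG; set M' := v^T *m G X + X^T *m DG.
have dXG := is_mxderive_mul (is_mxderive_tr (is_mxderive_id X v)) dG.
have dS : is_mxderive (fun Y => sym_xg Y (G Y)) X v (msym M').
  exact: is_mxderiveZ (is_mxderiveD dXG (is_mxderive_tr dXG)).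
apply: is_derive_eq (is_derive_frob dS (is_mxderive_defect X v)) _.
rewrite frob_sym_gramD ?trmx_msym // frob_msyml ?trmx_defect // frobDl.
congr (_ + _ + _); last by rewrite frob_mulmxl trmxK.
by rewrite -frob_trmx trmx_mul trmxK trmx_defect frob_mulmxl frobC.
Qed.

Lemma derive_calL f (G : V -> V) mu X v : is_grad f G -> derivable G X v ->
  'D_v (calL f G mu) X = frob (G X) v
    - 2^-1 * (frob (G X *m defect X) v + frob ('D_v G X) (X *m defect X)
              + 2 * frob (X *m sym_xg X (G X)) v)
    + mu * frob (X *m defect X) v.
Proof.
move=> gradf dG; have [/diff_derivable df fD] := gradf X.
have df_val : is_derive X v f (frob (G X) v) by exists; rewrite ?fD.
have -> : calL f G mu = f - 2^-1 \*: (fun Y => frob (sym_xg Y (G Y)) (defect Y))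
    + mu \*: @Npen R n p by [].
have := is_deriveD (is_deriveB df_val (is_deriveZ (2^-1)
  (is_derive_frob_msym_defect (derivable_mxderive dG))))
  (is_deriveZ mu (is_derive_Npen X v)).
by move=> dL; rewrite derive_val.
Qed.

End MeritDerivative.

Section LeftLipschitz.
Variables (R : realType) (n p : nat).
Local Notation V := ('M[R]_(n, p)).
Implicit Types (X v : V).

Lemma frob_derive_le_left_lipschitz (G : V -> V) X v (W : V) L :
  derivable G X v ->
  (\forall h \near 0^'-, fnorm (G (h *: v + X) - G X) <= L * fnorm (h *: v)) ->
  frob ('D_v G X) W <= L * fnorm v * fnorm W.
Proof.
move=> dG G_lip.
have := is_derive_frob (derivable_mxderive dG) (is_mxderive_cst W X v).
rewrite frob0r addr0 => dGW; rewrite -[frob ('D_v G X) W]derive_val.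
set q := fun h : R => h^-1 *: (((fun Y => frob (G Y) W) \o shift X) (h *: v)
                               - frob (G X) W).
have q_cvg : q @ 0^' --> 'D_v (fun Y => frob (G Y) W) X by exact: ex_derive.
have q_left : q @ 0^'- --> 'D_v (fun Y => frob (G Y) W) X.
  by apply: cvg_trans q_cvg; apply: cvg_app; apply: within_subset => h /ltr0_neq0.
apply: (cvgr_to_le q_left); near=> h.
have h_lt0 : h < 0 by near: h; exact: nbhs_left_lt.
have G_lip_h : fnorm (G (h *: v + X) - G X) <= L * fnorm (h *: v).
  by near: h; exact: G_lip.
rewrite /q /= [X in X <= _]/GRing.scale /= -frobBl -frobZl.
apply: le_trans (frob_le _ _) _; apply: ler_wpM2r; first exact: fnorm_ge0.
rewrite fnormZ normfV mulrC ler_pdivrMr ?normr_gt0 ?ltr0_neq0 //.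
by rewrite mulrAC -mulrA -fnormZ.
Unshelve. all: by end_near.
Qed.

Lemma defect_shift X v h : defect (h *: v + X)
  = defect X + (h *: (v^T *m X + X^T *m v) + h ^+ 2 *: (v^T *m v)).
Proof.
have -> : (h *: v + X)^T = h *: v^T + X^T by rewrite linearD linearZ.
rewrite mulmxDl !mulmxDr -!scalemxAl -!scalemxAr scalerA -expr2.
by apply/matrixP => i j; rewrite !mxE; ring.
Qed.

Lemma frob_quadratic_path_left_le m k (D E F : 'M[R]_(m, k)) : 0 < frob D E ->
  \forall h \near 0^'-,
    frob (D + (h *: E + h ^+ 2 *: F)) (D + (h *: E + h ^+ 2 *: F)) <= frob D D.
Proof.
move=> DE_gt0.
pose P : {poly R} := Poly [:: 2 * frob D E; frob E E + 2 * frob D F;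
                              2 * frob E F; frob F F].
have PE h : frob (D + (h *: E + h ^+ 2 *: F)) (D + (h *: E + h ^+ 2 *: F))
    = frob D D + h * P.[h].
  rewrite horner_Poly /= !(frobDl, frobDr, frobZl, frobZr).
  by rewrite (frobC E D) (frobC F D) (frobC F E); ring.
have P0_gt0 : 0 < P.[0] by rewrite horner_Poly /= !mulr0 !add0r; apply: mulr_gt0.
have P_cvg : horner P @ 0^'- --> P.[0].
  by apply: cvg_trans (@continuous_horner _ P 0); apply: cvg_app; exact: cvg_within.
near=> h.
have h_lt0 : h < 0 by near: h; exact: nbhs_left_lt.
have Ph_gt0 : 0 < P.[h] by near: h; exact: cvgr_gt P_cvg _ P0_gt0.
by rewrite PE gerDl mulr_le0_ge0 ?ltW.
Unshelve. all: by end_near.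
Qed.

Lemma fnorm_defect_shift_left_le X v : 0 < frob (X *m defect X) v ->
  \forall h \near 0^'-, fnorm (defect (h *: v + X)) <= fnorm (defect X).
Proof.
move=> Nv_gt0.
have DE_gt0 : 0 < frob (defect X) (v^T *m X + X^T *m v).
  by rewrite frob_sym_gramD ?trmx_defect //; exact: mulr_gt0.
apply: filterS (frob_quadratic_path_left_le (v^T *m v) DE_gt0) => h.
by rewrite -defect_shift => ?; rewrite ler_sqrt ?frob_ge0.
Qed.

End LeftLipschitz.

Section LambdaEstimates.
Variables (R : realType) (n p : nat).
Local Notation V := ('M[R]_(n, p)).
Variables (G : V -> V) (lam : R) (X : V).
Local Notation Lam := (LambdaF G lam X).

Lemma frob_normal_rgrad : frob (X *m defect X) (rgrad G X) = 0.
Proof. by rewrite frob_mulmx_sym_skew ?trmx_defect ?trmx_mskew. Qed.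

Lemma sqr_fnorm_LambdaF :
  fnorm Lam ^+ 2 = fnorm (rgrad G X) ^+ 2 + lam ^+ 2 * fnorm (X *m defect X) ^+ 2.
Proof.
rewrite !fnorm_sqr !(frobDl, frobDr, frobZl, frobZr) frob_normal_rgrad.
by rewrite frobC frob_normal_rgrad; ring.
Qed.

Lemma frob_LambdaF_grad_calL f GL mu :
  is_grad f G -> is_grad (calL f G mu) GL -> derivable G X Lam ->
  frob Lam (GL X) = frob (skew_gx (G X) X) (skew_gx (G X) X)
    - 2^-1 * frob (G X *m defect X) (rgrad G X)
    + lam * mu * fnorm (X *m defect X) ^+ 2
    - 3 / 2 * lam * frob (sym_xg X (G X)) (defect X *m defect X)
    - 2^-1 * frob ('D_Lam G X) (X *m defect X).
Proof.
move=> gradf gradL dG; rewrite frobC; have [_ <-] := gradL X; rewrite derive_calL //.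
have skewXS : frob (X *m sym_xg X (G X)) (rgrad G X) = 0.
  by rewrite frob_mulmx_sym_skew ?trmx_msym ?trmx_mskew.
have := congr1 (fun t => lam * t) (frob_normal_terms X (G X)).
rewrite /LambdaF !(frobDr (rgrad G X)) !(frobZr lam) /=.
rewrite frob_rgrad frob_normal_rgrad skewXS fnorm_sqr; lra.
Qed.

Lemma frob_derive_LambdaF_le eps L : 0 < lam -> StEps eps X ->
  (forall Y, StEps eps Y -> fnorm (G Y - G X) <= L * fnorm (Y - X)) ->
  derivable G X Lam ->
  frob ('D_Lam G X) (X *m defect X) <= L * fnorm Lam * fnorm (X *m defect X).
Proof.
move=> lam_gt0 stX G_lip dG.
have [->|N_neq0] := eqVneq (X *m defect X) 0; first by rewrite frob0r fnorm0 mulr0.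
apply: frob_derive_le_left_lipschitz => //.
have NLam_gt0 : 0 < frob (X *m defect X) Lam.
  by rewrite frobDr frobZr frob_normal_rgrad add0r mulr_gt0 ?frob_gt0.
apply: filterS (fnorm_defect_shift_left_le NLam_gt0) => h h_le.
by have := G_lip _ (le_trans h_le stX); rewrite addrK.
Qed.

End LambdaEstimates.

Lemma young_cross (R : realType) (e a w z : R) :
  0 <= e -> e < 1 -> 0 <= a -> 0 <= w -> z ^+ 2 <= (1 + e) * w ^+ 2 ->
  2^-1 * a * (w + z)
    <= (1 - e) / (2 * (1 + e)) * a ^+ 2 + (1 + e) ^+ 2 / (2 * (1 - e)) * w ^+ 2.
Proof.
move=> e_ge0 e_lt1 a_ge0 w_ge0 z_le.
have aw_le : 2 * ((1 - e ^+ 2) * a * w) <= (1 - e) ^+ 2 * a ^+ 2 + (1 + e) ^+ 2 * w ^+ 2.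
  by have := sqr_ge0 ((1 - e) * a - (1 + e) * w); nra.
have az_le : 2 * ((1 - e ^+ 2) * a * z) <= (1 - e) ^+ 2 * a ^+ 2 + (1 + e) ^+ 2 * z ^+ 2.
  by have := sqr_ge0 ((1 - e) * a - (1 + e) * z); nra.
have c_gt0 : 0 < 4 * (1 - e ^+ 2) by nra.
rewrite -(ler_pM2l c_gt0); have -> : 4 * (1 - e ^+ 2) * ((1 - e) / (2 * (1 + e)) * a ^+ 2
    + (1 + e) ^+ 2 / (2 * (1 - e)) * w ^+ 2)
  = 2 * ((1 - e) ^+ 2 * a ^+ 2 + (1 + e) ^+ 3 * w ^+ 2) by field; lra.
have := ler_wpM2l (sqr_ge0 (1 + e)) z_le.
have : 0 <= e * ((1 + e) ^+ 2 * w ^+ 2) by rewrite mulr_ge0 // mulr_ge0 ?sqr_ge0.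
nra.
Qed.

Section MeritScalar.
Variables (R : realType) (lam eps L Lh s mu : R).
Local Notation K := (Lh ^+ 2 * ((1 + eps) ^+ 2 / (lam * (1 - eps)))).
Local Notation rho := (Num.min (1 / 2) (lam * mu / (4 * lam ^+ 2 * (1 + eps)))).

Lemma mu_ge_cleared : eps < 3 / 4 ->
  2 / (3 - 4 * eps) * (L * (1 - eps) + 3 * s + K) <= mu ->
  2 * (L * (1 - eps) + 3 * s + K) <= mu * (3 - 4 * eps).
Proof.
move=> eps_lt; have c_gt0 : 0 < 3 - 4 * eps by lra.
by rewrite mulrAC ler_pdivrMr.
Qed.

Lemma K_ge0 : 0 < lam -> eps < 1 -> 0 <= K.
Proof.
move=> lam_gt0 eps_lt1.
by rewrite mulr_ge0 ?sqr_ge0 // divr_ge0 ?sqr_ge0 // mulr_ge0 ?subr_ge0 // ltW.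
Qed.

Lemma rho_lam_le : 0 < lam -> 0 < eps -> 0 <= mu -> rho * lam <= mu / 4.
Proof.
move=> lam_gt0 eps_gt0 mu_ge0.
have rho_le : rho <= lam * mu / (4 * lam ^+ 2 * (1 + eps)) by rewrite ge_min lexx orbT.
have lam_rho : rho * lam <= mu / (4 * (1 + eps)).
  have <- : lam * mu / (4 * lam ^+ 2 * (1 + eps)) * lam = mu / (4 * (1 + eps)).
    by field; rewrite !gt_eqF //; lra.
  by rewrite ler_wpM2r // ltW.
apply: le_trans lam_rho _; apply: ler_wpM2l => //.
by rewrite lef_pV2 ?posrE; lra.
Qed.

Lemma tangential_lower (a om2 : R) : 0 < eps -> a ^+ 2 <= (1 + eps) * om2 ->
  (1 - eps) / (2 * (1 + eps)) * a ^+ 2 <= om2 - rho * a ^+ 2.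
Proof.
move=> eps_gt0 a_le.
have rho_le : rho * a ^+ 2 <= 2^-1 * a ^+ 2.
  by rewrite ler_wpM2r ?sqr_ge0 // ge_min mul1r lexx.
have -> : (1 - eps) / (2 * (1 + eps)) * a ^+ 2 = a ^+ 2 / (1 + eps) - 2^-1 * a ^+ 2.
  by field; rewrite gt_eqF //; lra.
apply: lerB rho_le; rewrite ler_pdivrMr; last lra.
by rewrite mulrC.
Qed.

Lemma mu_gt0 : 0 < L -> 0 < lam -> 0 < eps -> eps < 3 / 4 -> 0 <= s ->
  2 / (3 - 4 * eps) * (L * (1 - eps) + 3 * s + K) <= mu -> 0 < mu.
Proof.
move=> L_gt0 lam_gt0 eps_gt0 eps_lt s_ge0 /(mu_ge_cleared eps_lt) mu_le.
have K0 : 0 <= K by apply: K_ge0; lra.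
have : 0 < mu * (3 - 4 * eps) by apply: lt_le_trans mu_le; nra.
by rewrite pmulr_lgt0 //; lra.
Qed.

Lemma normal_lower (r b d : R) : 0 < L -> 0 < lam -> 0 < eps -> eps < 3 / 4 ->
  0 <= s -> 2 / (3 - 4 * eps) * (L * (1 - eps) + 3 * s + K) <= mu ->
  r * lam <= mu / 4 -> (1 - eps) * d ^+ 2 <= b ^+ 2 ->
  3 / 2 * lam * s * d ^+ 2 + (1 + eps) ^+ 2 / (2 * (1 - eps)) * (Lh * d) ^+ 2
    <= lam * b ^+ 2 * (mu - r * lam - L / 2).
Proof.
move=> L_gt0 lam_gt0 eps_gt0 eps_lt s_ge0 mu_ge r_le b_ge.
have mu_pos := mu_gt0 L_gt0 lam_gt0 eps_gt0 eps_lt s_ge0 mu_ge.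
have {mu_ge}mu_le := mu_ge_cleared eps_lt mu_ge.
have K0 : 0 <= K by apply: K_ge0; lra.
set m := mu - r * lam - L / 2.
have m_ge : 3 / 2 * s + K / 2 <= (1 - eps) * m.
  have h1 : 0 <= (1 - eps) * (mu / 4 - r * lam) by apply: mulr_ge0; lra.
  have h2 : 0 <= mu * eps by apply: mulr_ge0; lra.
  by rewrite /m; lra.
have m_ge0 : 0 <= m.
  have h : 0 <= (1 - eps) * m by lra.
  by rewrite pmulr_rge0 in h; lra.
have -> : 3 / 2 * lam * s * d ^+ 2 + (1 + eps) ^+ 2 / (2 * (1 - eps)) * (Lh * d) ^+ 2
    = lam * (d ^+ 2 * (3 / 2 * s + K / 2)).
  by field; rewrite !gt_eqF //; lra.
rewrite -[lam * b ^+ 2 * m]mulrA; apply: ler_wpM2l; first exact: ltW.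
apply: le_trans (_ : (1 - eps) * d ^+ 2 * m <= _); last exact: ler_wpM2r.
have -> : (1 - eps) * d ^+ 2 * m = d ^+ 2 * ((1 - eps) * m) by ring.
by apply: ler_wpM2l; first exact: sqr_ge0.
Qed.

Lemma merit_scalar_bound (a b d g om2 x1 x2 x3 lamn : R) :
  0 < L -> L <= Lh -> 0 < lam -> 0 < eps -> eps < 3 / 4 -> 0 <= s ->
  2 / (3 - 4 * eps) * (L * (1 - eps) + 3 * s + K) <= mu ->
  0 <= a -> 0 <= b -> 0 <= d -> 0 <= lamn -> d <= eps -> g <= Lh ->
  a ^+ 2 <= (1 + d) * om2 -> x1 <= g * d * a -> x2 <= d * d * s ->
  x3 <= L * lamn * b -> lamn ^+ 2 = a ^+ 2 + lam ^+ 2 * b ^+ 2 ->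
  (1 - d) * d ^+ 2 <= b ^+ 2 -> b ^+ 2 <= (1 + d) * d ^+ 2 ->
  rho * lamn ^+ 2 <= om2 - 2^-1 * x1 + lam * mu * b ^+ 2 - 3 / 2 * lam * x2 - 2^-1 * x3.
Proof.
move=> L_gt0 L_le lam_gt0 eps_gt0 eps_lt s_ge0 mu_ge a_ge0 b_ge0 d_ge0 lamn_ge0.
move=> d_le g_le a_le x1_le x2_le x3_le lamnE b_ge b_le.
have mu_pos := mu_gt0 L_gt0 lam_gt0 eps_gt0 eps_lt s_ge0 mu_ge.
have rho_half : rho <= 1 / 2 by rewrite ge_min lexx.
have rho_lam := rho_lam_le lam_gt0 eps_gt0 (ltW mu_pos).
have d2_ge0 := sqr_ge0 d.
have b_ge' : (1 - eps) * d ^+ 2 <= b ^+ 2.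
  by apply: le_trans b_ge; apply: ler_wpM2r => //; lra.
have b_le' : b ^+ 2 <= (1 + eps) * d ^+ 2.
  by apply: le_trans b_le _; apply: ler_wpM2r => //; lra.
have normal := normal_lower L_gt0 lam_gt0 eps_gt0 eps_lt s_ge0 mu_ge rho_lam b_ge'.
have om2_ge0 : 0 <= om2 by have := sqr_ge0 a; nra.
have tangential : (1 - eps) / (2 * (1 + eps)) * a ^+ 2 <= om2 - rho * a ^+ 2.
  by apply: tangential_lower => //; apply: le_trans a_le _; apply: ler_wpM2r; lra.
have Lh_ge0 : 0 <= Lh by lra.
have Lb_le : (Lh * b) ^+ 2 <= (1 + eps) * (Lh * d) ^+ 2.
  by have := ler_wpM2l (sqr_ge0 Lh) b_le'; rewrite !exprMn; lra.
have eps_lt1 : eps < 1 by lra.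
have cross := young_cross (ltW eps_gt0) eps_lt1 a_ge0 (mulr_ge0 Lh_ge0 d_ge0) Lb_le.
have lamn_le : lamn <= a + lam * b.
  have ab_ge0 : 0 <= a * (lam * b) by rewrite mulr_ge0 ?mulr_ge0 // ltW.
  have lb_ge0 : 0 <= lam * b by rewrite mulr_ge0 // ltW.
  by nra.
have x3_le' : x3 <= Lh * a * b + lam * L * b ^+ 2.
  have : L * lamn * b <= L * (a + lam * b) * b.
    by apply: ler_wpM2r => //; apply: ler_wpM2l => //; exact: ltW.
  have : L * a * b <= Lh * a * b by apply: ler_wpM2r => //; apply: ler_wpM2r.
  lra.
have x1_le' : x1 <= a * Lh * d.
  rewrite (_ : a * Lh * d = Lh * d * a); last by ring.
  exact: le_trans x1_le (ler_wpM2r a_ge0 (ler_wpM2r d_ge0 g_le)).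
have x2_le' : lam * x2 <= lam * (s * d ^+ 2).
  by apply: ler_wpM2l; [exact: ltW | rewrite expr2 mulrC].
rewrite lamnE; move: (rho) tangential normal => r tangential normal.
clear -tangential normal cross x1_le' x2_le' x3_le'; lra.
Qed.

End MeritScalar.

Theorem proposition7 (R : realType) (n p : nat)
  (lam eps L L' s mu : R)
  (f : 'M[R]_(n, p) -> R) (G : 'M[R]_(n, p) -> 'M[R]_(n, p))
  (GL : 'M[R]_(n, p) -> 'M[R]_(n, p)) :
  (1 <= p)%N -> (p <= n)%N ->
  0 < lam -> 0 < eps -> eps < 3 / 4 ->
  (* f is C^2 with Euclidean gradient G *)
  is_grad f G ->
  (forall X, differentiable G X) ->
  (forall H, continuous (fun X => 'D_H G X)) ->
  (* nabla f is L-Lipschitz on St(p,n)^eps *)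
  0 < L ->
  (forall X Y, StEps eps X -> StEps eps Y -> fnorm (G X - G Y) <= L * fnorm (X - Y)) ->
  (* L' = max over St(p,n)^eps of ||nabla f|| *)
  (exists2 X0, StEps eps X0 & fnorm (G X0) = L') ->
  (forall X, StEps eps X -> fnorm (G X) <= L') ->
  (* s = sup over St(p,n)^eps of ||sym(X^T nabla f(X))|| *)
  (forall X, StEps eps X -> fnorm (msym (X^T *m G X)) <= s) ->
  (forall s', (forall X, StEps eps X -> fnorm (msym (X^T *m G X)) <= s') -> s <= s') ->
  mu >= 2 / (3 - 4 * eps) *
        (L * (1 - eps) + 3 * s
         + (Num.max L L') ^+ 2 * ((1 + eps) ^+ 2 / (lam * (1 - eps)))) ->
  (* GL is the gradient of the merit function calL *)
  is_grad (calL f G mu) GL ->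
  let nu := lam * mu in
  let rho := Num.min (1 / 2) (nu / (4 * lam ^+ 2 * (1 + eps))) in
  forall X, StEps eps X ->
    frob (LambdaF G lam X) (GL X) >= rho * fnorm (LambdaF G lam X) ^+ 2.
Proof.
move=> _ _ lam_gt0 eps_gt0 eps_lt gradf G_diff _ L_gt0 G_lip _ G_le s_le _ mu_ge.
move=> gradL nu rho X stX.
have dG : derivable G X (LambdaF G lam X) by exact: diff_derivable.
have s_ge0 : 0 <= s := le_trans (fnorm_ge0 _) (s_le X stX).
have G_le_max : fnorm (G X) <= Num.max L L' by rewrite le_max G_le ?orbT.
have L_le_max : L <= Num.max L L' by rewrite le_max lexx.
rewrite (frob_LambdaF_grad_calL gradf gradL dG).
apply: (merit_scalar_bound (a := fnorm (rgrad G X)) (d := fnorm (defect X))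
  (g := fnorm (G X)) (lamn := fnorm (LambdaF G lam X))
  L_gt0 L_le_max lam_gt0 eps_gt0 eps_lt s_ge0 mu_ge); rewrite ?fnorm_ge0 //.
- exact: sqr_fnorm_mulmx_gram_le.
- exact: frob_mulmxl_le.
- rewrite frobC; apply: le_trans (frob_mulmxl_le _ _ _) _.
  by apply: ler_wpM2l; rewrite ?mulr_ge0 ?fnorm_ge0 ?s_le.
- exact: frob_derive_LambdaF_le (fun Y stY => G_lip Y X stY stX) dG.
- exact: sqr_fnorm_LambdaF.
- exact: sqr_fnorm_normal_ge.
- exact: sqr_fnorm_normal_le.
Qed.
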